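(* Let $a,b\colon\mathbb N\to\mathbb Z\setminus\{0\}$ be two injective sequences. Then there exist a probability space $(X,\mathcal X,\mu)$ and measure preserving transformations $T,S\colon X\to X$, both Bernoulli, such that (i) for some $f,g\in L^\infty(\mu)$ the averages $\frac1N\sum_{n=1}^N\int f\circ T^{a(n)}\cdot g\circ S^{b(n)}\,d\mu$ diverge as $N\to\infty$; and (ii) for some $A\in\mathcal X$ with $\mu(A)>0$ one has $\mu(T^{-a(n)}A\cap S^{-b(n)}A)=0$ for every $n\in\mathbb N$.
   Context: A measure preserving transformation $T$ of $(X,\mathcal X,\mu)$ is called Bernoulli if $(X,\mathcal X,\mu,T)$ is isomorphic to a (two-sided) Bernoulli shift on finitely many symbols; in particular it is invertible, so negative powers make sense. *)

From HB Require Import structures.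
From mathcomp Require Import all_boot all_order all_algebra.
From mathcomp Require Import all_classical all_reals all_analysis.
Set Implicit Arguments. Unset Strict Implicit. Unset Printing Implicit Defensive.
Import Order.TTheory GRing.Theory Num.Theory.
Local Open Scope classical_set_scope.
Local Open Scope ring_scope.

Definition iterz {X : Type} (T Tinv : X -> X) (z : int) : X -> X :=
  match z with
  | Posz n => iter n T
  | Negz n => iter n.+1 Tinv
  end.

Definition invertible_mpt {d} {X : measurableType d} {R : realType}
  (mu : set X -> \bar R) (T Tinv : X -> X) : Prop :=
  [/\ measurable_fun setT T, measurable_fun setT Tinv,
      cancel T Tinv, cancel Tinv T &
      forall A : set X, measurable A -> mu (T @^-1` A) = mu A].

(* 'I_k.+1 is pointed (by ord0), needed for the generated sigma-algebra. *)
HB.instance Definition _ (k : nat) := isPointed.Build 'I_k.+1 ord0.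

(* The two-sided full shift on the k.+1 symbols 'I_k.+1:
   the space int -> 'I_k.+1 with the product sigma-algebra, i.e. the one
   generated by the coordinate sets {z | z j = s}. *)
Definition shift_coords (k : nat) : set (set (int -> 'I_k.+1)) :=
  fun A => exists (j : int) (s : 'I_k.+1), A = [set z | z j = s].

Arguments shift_coords k : clear implicits.

Notation shift_space k := (g_sigma_algebraType (shift_coords k)).

Definition shift_map (k : nat) (z : shift_space k) : shift_space k :=
  fun j => z (j + 1)%R.
Arguments shift_map k z : clear implicits.

(* nu is the Bernoulli (product) measure with probability vector p:
   the measure of every cylinder is the product of the probabilities.
   (A measure on the product sigma-algebra is determined by these values.) *)
Definition bernoulli_measure {R : realType} (k : nat) (p : 'I_k.+1 -> R)
  (nu : set (shift_space k) -> \bar R) : Prop :=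
  forall (m : nat) (n0 : int) (w : 'I_m -> 'I_k.+1),
    nu [set z : shift_space k | forall i : 'I_m, z (n0 + (i : nat)%:Z)%R = w i]
    = (\prod_(i < m) p (w i))%:E.

(* (X, mu, T) is Bernoulli: isomorphic (mod 0) to a two-sided Bernoulli shift
   on finitely many symbols with a positive probability vector p. *)
Definition is_bernoulli {d} {X : measurableType d} {R : realType}
  (mu : {measure set X -> \bar R}) (T : X -> X) : Prop :=
  exists (k : nat) (p : 'I_k.+1 -> R)
         (nu : {measure set (shift_space k) -> \bar R})
         (phi : X -> shift_space k) (psi : shift_space k -> X),
    [/\ (forall i, 0 < p i) /\ \sum_(i < k.+1) p i = 1,
        bernoulli_measure p nu,
        measurable_fun setT phi /\ measurable_fun setT psi,
        (forall B : set (shift_space k), measurable B ->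
           mu (phi @^-1` B) = nu B) &
        [/\ {ae mu, forall x, psi (phi x) = x},
             {ae nu, forall z, phi (psi z) = z} &
             {ae mu, forall x, phi (T x) = shift_map k (phi x)}]].

(* Essentially bounded measurable functions (bounded representatives of
   L^infty classes). *)
Definition Linfty_fun {d} {X : measurableType d} {R : realType}
  (f : X -> R) : Prop :=
  measurable_fun setT f /\ exists M : R, forall x, `|f x| <= M.

From HB Require Import structures.
From mathcomp Require Import all_boot all_order all_algebra.
From mathcomp Require Import all_classical all_reals all_analysis.
From mathcomp Require Import zify lra.
Set Implicit Arguments. Unset Strict Implicit. Unset Printing Implicit Defensive.
Import Order.TTheory GRing.Theory Num.Theory Num.Def numFieldNormedType.Exports.
Local Open Scope classical_set_scope.

(* The space is ({0,1}^4)^Z with the fair coin measure, realised on [nat -> bool]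
   as the law of the binary digits of a uniform point of [0,1]. T is the shift and
   S = Psi^-1 T Psi, where Psi permutes the coordinates and flips some of them; Psi
   preserves the measure, so S is Bernoulli along with T. Psi is chosen so that for
   n > 0 the row-1 coordinate at time 0 of S^(b n) x is the row-0 coordinate at time
   a n of x, flipped when n lies in a dyadic block (2^m, 2^m.+1] with m odd, and the
   row-3 coordinate at time 0 of S^(b n) x is the negated row-2 coordinate at time
   a n. So for the +-1 valued row-0 and row-1 coordinates f, g at time 0 the
   correlation in (i) is the sign (-1)^m, whose Cesaro averages oscillate between
   the ends of consecutive blocks, and the set A where rows 2 and 3 vanish at time 0
   has T^-(a n) A and S^-(b n) A disjoint. *)

(** * Counting binary words *)

(* [digit N m k] is the [k]-th digit of the [N]-digit binary expansion of [m],
   counted from the most significant one. *)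
Definition digit (N m k : nat) : bool := odd (m %/ 2 ^ (N - k.+1)).

Definition matches (L : seq (nat * bool)) (f : nat -> bool) : bool :=
  all (fun p => f p.1 == p.2) L.

Definition allows (L : seq (nat * bool)) (k : nat) (b : bool) : bool :=
  all (fun p => (p.1 == k) ==> (b == p.2)) L.

Lemma big_nat_double (F : nat -> nat) n :
  \sum_(0 <= m < n.*2) F m = \sum_(0 <= m < n) (F m.*2 + F m.*2.+1).
Proof.
elim: n => [|n IHn]; first by rewrite !big_geq.
by rewrite doubleS !big_nat_recr //= IHn !addnA.
Qed.

Lemma digit_add_double N m r k : r < 2 -> k <= N ->
  digit N.+1 (r + m.*2) k = if k < N then digit N m k else odd r.
Proof.
move=> r2 kN; rewrite /digit subSS; case: ltnP => [kN'|Nk].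
  have -> : N - k = (N - k.+1).+1 by lia.
  by rewrite expnS divnMA -muln2 (divnDMl _ _ (isT : 0 < 2)) (divn_small r2).
have -> : k = N by lia.
by rewrite subnn divn1 oddD odd_double addbF.
Qed.

Lemma all_digits_rcons N m r (Q : nat -> bool -> bool) : r < 2 ->
  all (fun k => Q k (digit N.+1 (r + m.*2) k)) (iota 0 N.+1)
  = all (fun k => Q k (digit N m k)) (iota 0 N) && Q N (odd r).
Proof.
move=> r2; have -> : iota 0 N.+1 = iota 0 N ++ [:: N] by rewrite -addn1 iotaD.
rewrite all_cat /= andbT digit_add_double // ltnn; congr andb; apply/eq_in_all => k.
by rewrite mem_iota add0n => /andP[_ kN]; rewrite digit_add_double ?kN // ltnW.
Qed.

Lemma sum_all_digits N (Q : nat -> bool -> bool) :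
  \sum_(0 <= m < 2 ^ N) all (fun k => Q k (digit N m k)) (iota 0 N)
  = \prod_(0 <= k < N) (Q k false + Q k true).
Proof.
elim: N Q => [|N IHN] Q; first by rewrite big_nat1 big_geq.
rewrite big_nat_recr // -IHN expnS mul2n big_nat_double [RHS]/= big_distrl.
apply: eq_bigr => m _.
have := all_digits_rcons N m Q (isT : 0 < 2); rewrite add0n => ->.
have := all_digits_rcons N m Q (isT : 1 < 2); rewrite add1n => ->.
by case: (all _ _); case: (Q N false); case: (Q N true).
Qed.

Lemma matches_allows N L f : all (fun p => p.1 < N) L ->
  matches L f = all (fun k => allows L k (f k)) (iota 0 N).
Proof.
move=> LN; apply/allP/allP => [Lf k _|Lf p pL].
  by apply/allP => p pL; apply/implyP => /eqP <-; exact: Lf.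
have : p.1 \in iota 0 N by rewrite mem_iota; move/allP: LN => /(_ p pL).
by move=> /Lf /allP /(_ p pL); rewrite eqxx.
Qed.

Lemma allows_notin L k b : k \notin map fst L -> allows L k b.
Proof.
elim: L => [|p L IHL] //=; rewrite inE negb_or => /andP[kp kL].
by rewrite IHL // andbT; apply/implyP => /eqP pk; rewrite pk eqxx in kp.
Qed.

Lemma allows_count L k : uniq (map fst L) ->
  allows L k false + allows L k true = if k \in map fst L then 1 else 2.
Proof.
elim: L => [|p L IHL] //= /andP[pL uL]; rewrite inE.
have [<-|kp] /= := eqVneq p.1 k; last by rewrite IHL // (negbTE kp).
by rewrite !allows_notin //; case: p.2.
Qed.

Lemma prod_mem_keys N (K : seq nat) : uniq K -> all (fun k => k < N) K ->
  \prod_(0 <= k < N) (if k \in K then 1 else 2) = 2 ^ (N - size K).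
Proof.
move=> uK KN.
have -> : \prod_(0 <= k < N) (if k \in K then 1 else 2)
          = 2 ^ count (predC (mem K)) (iota 0 N).
  elim: N {KN} => [|n IHn]; first by rewrite big_geq.
  have -> : iota 0 n.+1 = iota 0 n ++ [:: n] by rewrite -addn1 iotaD.
  by rewrite big_nat_recr //= IHn count_cat expnD /=; case: (n \in K).
suff <- : count (mem K) (iota 0 N) = size K.
  by congr (2 ^ _); have := count_predC (mem K) (iota 0 N); rewrite size_iota; lia.
rewrite -size_filter; apply/perm_size/uniq_perm; rewrite ?filter_uniq ?iota_uniq //.
move=> x; rewrite mem_filter mem_iota /= add0n.
by apply/andP/idP => [[]//|xK]; split => //; exact: (allP KN).
Qed.

Lemma count_matching_words N L :
  all (fun p => p.1 < N) L -> uniq (map fst L) ->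
  \sum_(0 <= m < 2 ^ N) matches L (digit N m) = 2 ^ (N - size L).
Proof.
move=> LN uL.
rewrite (eq_bigr (fun m => all (fun k => allows L k (digit N m k)) (iota 0 N) : nat)).
  rewrite sum_all_digits (eq_bigr (fun k => if k \in map fst L then 1 else 2)).
    rewrite prod_mem_keys ?size_map //.
    by apply/allP => k /mapP [p pL ->]; exact: (allP LN).
  by move=> k _; rewrite allows_count.
by move=> m _; rewrite (matches_allows _ LN).
Qed.

Local Open Scope ring_scope.

(** * The fair coin measure on [nat -> bool] *)

Definition coin_coords : set (set (nat -> bool)) :=
  fun A => exists (k : nat) (b : bool), A = [set x | x k = b].

Notation coins := (g_sigma_algebraType coin_coords).

Lemma measurable_coin_coord k b : measurable [set x : coins | x k = b].
Proof. by apply: sub_sigma_algebra; exists k, b. Qed.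

Lemma measurable_fun_coins d (T : measurableType d) (f : T -> coins) :
  (forall k b, measurable (f @^-1` [set x | x k = b])) -> measurable_fun setT f.
Proof.
move=> mf; apply: (@measurability _ _ _ _ setT f coin_coords) => //.
by move=> _ [_ [k [b ->]] <-]; rewrite setTI; exact: mf.
Qed.

Definition cylinder (L : seq (nat * bool)) : set coins := [set x | matches L x].

Lemma cylinder_nil : cylinder [::] = setT.
Proof. by apply/seteqP; split. Qed.

Lemma cylinder_cons p L : cylinder (p :: L) = [set x | x p.1 = p.2] `&` cylinder L.
Proof.
apply/seteqP; split => x; rewrite /cylinder /matches /=.
  by move=> /andP[/eqP -> ->].
by move=> [-> ->]; rewrite eqxx.
Qed.

Lemma measurable_cylinder L : measurable (cylinder L).
Proof.
elim: L => [|p L IHL]; first by rewrite cylinder_nil.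
by rewrite cylinder_cons; apply: measurableI => //; exact: measurable_coin_coord.
Qed.

Section BinaryExpansion.
Variable R : realType.

Lemma measurable_truncn_eq n : measurable [set x : R | truncn x = n].
Proof.
have -> : [set x : R | truncn x = n] =
    `]-oo, n.+1%:R[ `&` [set x | (n <= truncn x)%N].
  apply/seteqP; split => x /=; rewrite in_itv /= -truncn_le_nat.
    by move=> ->; rewrite leqnn.
  by move=> [xn nx]; apply/eqP; rewrite eqn_leq xn nx.
apply: measurableI => //; case: n => [|m].
  by rewrite [X in measurable X](_ : _ = setT) //; apply/seteqP; split.
rewrite [X in measurable X](_ : _ = `[m.+1%:R, +oo[%classic) //.
by apply/seteqP; split => x /=; rewrite in_itv /= andbT truncn_gt_nat.
Qed.

Lemma measurable_truncn_pred (P : pred nat) : measurable [set x : R | P (truncn x)].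
Proof.
have -> : [set x : R | P (truncn x)] =
    \bigcup_(n in [set n | P n]) [set x : R | truncn x = n].
  apply/seteqP; split => x /=; first by move=> Px; exists (truncn x).
  by move=> [n Pn /= ->].
by apply: bigcup_measurable => n _; exact: measurable_truncn_eq.
Qed.

(* Typed on the Borel sets of [R], where [uniform_prob] lives, so that it can be
   declared an [mfun] and pushed forward by [distribution]. *)
Definition binary_digits (u : g_sigma_algebraType R.-ocitv.-measurable) : coins :=
  fun k => odd (truncn (u * 2 ^+ k.+1)).

Lemma measurable_binary_digits : measurable_fun setT binary_digits.
Proof.
apply: measurable_fun_coins => k b.
have -> : binary_digits @^-1` [set x | x k = b] =
    ( *%R^~ (2 ^+ k.+1)) @^-1` [set x : R | odd (truncn x) == b].
  by apply/seteqP; split => x /= /eqP.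
rewrite -[X in measurable X]setTI.
exact: (measurable_realfun.mulrr_measurable _ measurableT
  (measurable_truncn_pred (fun n => odd n == b))).
Qed.

HB.instance Definition _ :=
  isMeasurableFun.Build _ _ _ _ binary_digits measurable_binary_digits.

Definition coin := distribution (uniform_prob (@ltr01 R)) binary_digits.

Lemma uniform01E (A : set (g_sigma_algebraType R.-ocitv.-measurable)) :
  measurable A -> uniform_prob (@ltr01 R) A = lebesgue_measure (A `&` `[0%R, 1%R[).
Proof.
move=> mA; rewrite /uniform_prob integral_uniform_pdf.
have m01 : measurable (A `&` `[0%R, 1%R]) by apply: measurableI.
rewrite (eq_integral (cst 1%E)); last first.
  move=> x; rewrite inE /= => -[_]; rewrite in_itv /= /uniform_pdf => ->.
  by rewrite subr0 invr1.
rewrite integral_cst // mul1e.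
have -> : A `&` `[0%R, 1%R] = (A `&` `[0%R, 1%R[) `|` (A `&` [set 1%R]).
  apply/seteqP; split => x /=; rewrite !in_itv /=.
    move=> [Ax /andP[x0 x1]]; have [x1'|] := ltP x 1; first by left; rewrite x0.
    by right; split => //; apply/eqP; rewrite eq_le x1.
  move=> [[Ax /andP[x0 /ltW x1]]|[Ax x1]]; split => //; first by rewrite x0 x1.
  by rewrite x1 ler01 lexx.
rewrite measureU //.
- rewrite (_ : _ (A `&` [set 1%R]) = 0%E) ?adde0 //.
  apply/eqP; rewrite eq_le measure_ge0 andbT -(lebesgue_measure_set1 (1%R : R)).
  by apply: le_measure => //; rewrite inE //; apply: measurableI.
- exact: measurableI.
- exact: measurableI.
- apply/seteqP; split => x //= [[_]]; rewrite in_itv /= => /andP[_ x1] [_ x_eq1].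
  by rewrite x_eq1 ltxx in x1.
Qed.

Lemma truncn_divn (x : R) (d : nat) : 0 <= x -> (0 < d)%N ->
  truncn (x / d%:R) = (truncn x %/ d)%N.
Proof.
move=> x0 d0; have d0R : (0 : R) < d%:R by rewrite ltr0n.
have tx : (truncn x)%:R <= x by rewrite truncn_le.
apply: truncn_def; rewrite ler_pdivlMr // ltr_pdivrMr // -!natrM.
rewrite (le_trans _ tx) ?ler_nat ?leq_divM //=.
by rewrite (lt_le_trans (truncnS_gt x)) // ler_nat ltn_ceil.
Qed.

Lemma binary_digitsE u N k : 0 <= u -> (k < N)%N ->
  binary_digits u k = digit N (truncn (u * 2 ^+ N)) k.
Proof.
move=> u0 kN; rewrite /binary_digits /digit -truncn_divn ?expn_gt0 //; last first.
  by rewrite mulr_ge0 // exprn_ge0.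
have -> : N = (k.+1 + (N - k.+1))%N by rewrite subnKC.
by rewrite exprD natrX mulrA addKn mulfK // expf_neq0.
Qed.

Definition dyadic_itv (N m : nat) : set R := `[m%:R / 2 ^+ N, m.+1%:R / 2 ^+ N[.

Lemma dyadic_itvP N m u : dyadic_itv N m u <-> 0 <= u /\ truncn (u * 2 ^+ N) = m.
Proof.
have p2 : (0 : R) < 2 ^+ N by rewrite exprn_gt0.
rewrite /dyadic_itv /= in_itv /= ler_pdivrMr // ltr_pdivlMr //.
split => [/andP[h1 h2]|[u0 /eqP]].
  have u0 : 0 <= u by rewrite -(pmulr_lge0 _ p2) (le_trans _ h1).
  by split => //; apply/eqP; rewrite truncn_eq ?h1 ?h2 // mulr_ge0 // ltW.
by rewrite truncn_eq // mulr_ge0 // ltW.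
Qed.

Lemma lebesgue_dyadic_itv N m : lebesgue_measure (dyadic_itv N m) = (2 ^+ N)^-1%:E.
Proof.
rewrite lebesgue_measure_itv /= lte_fin ltr_pM2r ?invr_gt0 ?exprn_gt0 //.
by rewrite ltr_nat ltnSn -EFinD -mulrBl -natrB // subSnn mul1r.
Qed.

Lemma trivIset_dyadic_itv N :
  trivIset [set: 'I_(2 ^ N)] (fun i : 'I_(2 ^ N) => dyadic_itv N i).
Proof.
apply/trivIsetP => i j _ _ ij; apply/seteqP; split => // u /= [].
move=> /dyadic_itvP[_ ei] /dyadic_itvP[_ ej].
by rewrite -(inj_eq val_inj) /= -ei -ej eqxx in ij.
Qed.

Lemma binary_digits_cylinder N L : all (fun p => (p.1 < N)%N) L ->
  binary_digits @^-1` cylinder L `&` `[0%R, 1%R[ =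
  \big[setU/set0]_(m < 2 ^ N | matches L (digit N m)) dyadic_itv N m.
Proof.
move=> LN; have p2 : (0 : R) < 2 ^+ N by rewrite exprn_gt0.
have digitsE u : 0 <= u -> matches L (binary_digits u) =
                 matches L (digit N (truncn (u * 2 ^+ N))).
  move=> u0; apply/eq_in_all => p pL.
  by rewrite (binary_digitsE (N := N)) //; exact: (allP LN).
rewrite -bigcup_seq_cond; apply/seteqP; split => u /=.
  move=> [Lu]; rewrite in_itv /= => /andP[u0 u1].
  have mN : (truncn (u * 2 ^+ N) < 2 ^ N)%N.
    by rewrite truncn_lt_nat ?mulr_ge0 ?(ltW p2) // natrX gtr_pMl // ltr0n expn_gt0.
  exists (Ordinal mN); last exact/dyadic_itvP.
  by rewrite /= mem_index_enum -digitsE.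
move=> [m /= /andP[_ Lm] /dyadic_itvP[u0 um]]; split.
  by rewrite /cylinder /= digitsE // um.
rewrite in_itv /= u0 /=; have := ltn_ord m; rewrite -um.
by rewrite truncn_lt_nat ?mulr_ge0 ?(ltW p2) // natrX gtr_pMl // ltr0n expn_gt0.
Qed.

Lemma coin_cylinder_bounded N L :
  all (fun p => (p.1 < N)%N) L -> uniq (map fst L) ->
  coin (cylinder L) = ((2 ^+ size L)^-1 : R)%:E.
Proof.
move=> LN uL.
have mL : measurable (binary_digits @^-1` cylinder L).
  rewrite -[X in measurable X]setTI.
  by apply: measurable_binary_digits => //; exact: measurable_cylinder.
transitivity (lebesgue_measure (binary_digits @^-1` cylinder L `&` `[0%R, 1%R[)).
  exact: uniform01E mL.
rewrite (binary_digits_cylinder LN).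
rewrite measure_bigsetU_ord //;
  [|by move=> m; exact: measurable_itv|exact: trivIset_dyadic_itv].
transitivity (\sum_(m < 2 ^ N | matches L (digit N m)) ((2 ^+ N)^-1 : R)%:E)%E.
  by apply: eq_bigr => m _; exact: lebesgue_dyadic_itv.
rewrite sumEFin sumr_const; congr EFin.
have -> : #|[pred i : 'I_(2 ^ N) | matches L (digit N i)]| = (2 ^ (N - size L))%N.
  rewrite -(count_matching_words LN uL) big_mkord -sum1_card big_mkcond /=.
  by apply: eq_bigr => m _; rewrite inE; case: (matches _ _).
have sLN : (size L <= N)%N.
  rewrite -(size_map fst) -(size_iota 0 N); apply: uniq_leq_size => // k.
  by move=> /mapP[p pL ->]; rewrite mem_iota /=; exact: (allP LN).
rewrite -{1}(subnKC sLN) -(mulr_natr _ (2 ^ (N - size L))) natrX exprD invfM -mulrA.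
by rewrite mulVf ?mulr1 // expf_neq0.
Qed.

Lemma coin_cylinder L : uniq (map fst L) -> coin (cylinder L) = ((2 ^+ size L)^-1 : R)%:E.
Proof.
move=> uL; apply: (coin_cylinder_bounded (N := \max_(p <- L) p.1.+1)) => //.
by apply/allP => p pL; exact: (@leq_bigmax_seq _ L xpredT (fun p => p.1.+1) p pL).
Qed.

End BinaryExpansion.

Definition cylinder_system : set (set coins) :=
  [set A | exists2 L, uniq (map fst L) & A = cylinder L] `|` [set set0].

Lemma cylinder_system_setI_coord A k b :
  cylinder_system A -> cylinder_system (A `&` [set x : coins | x k = b]).
Proof.
case=> [[L uL ->]|->]; last by right; rewrite set0I.
have [/mapP[q qL kq]|kL] := boolP (k \in map fst L); last first.
  by left; exists ((k, b) :: L); rewrite /= ?kL // cylinder_cons setIC.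
have [qb|qb] := eqVneq q.2 b.
  left; exists L => //; apply/seteqP; split => x; first by case.
  by move=> Lx; split => //; move/allP: Lx => /(_ q qL) /eqP; rewrite -kq -qb.
right; apply/seteqP; split => // x [/allP /(_ q qL) /eqP xq xk].
by rewrite -xq -kq xk eqxx in qb.
Qed.

Lemma cylinder_system_setI : setI_closed cylinder_system.
Proof.
move=> A B sA [[L _ ->]|->]; last by right; rewrite setI0.
elim: L A sA => [|p L IHL] A sA; first by rewrite cylinder_nil setIT.
by rewrite cylinder_cons setIA; apply/IHL/cylinder_system_setI_coord.
Qed.

Lemma cylinder_system_setT : cylinder_system setT.
Proof. by left; exists [::]; rewrite ?cylinder_nil. Qed.

Lemma measurable_coinsE : @measurable _ coins = <<s cylinder_system >>.
Proof.
apply/seteqP; split.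
  apply: smallest_sub; first exact: smallest_sigma_algebra.
  move=> _ [k [b ->]]; apply: sub_sigma_algebra; left; exists [:: (k, b)] => //.
  by rewrite cylinder_cons cylinder_nil setIT.
apply: smallest_sub; first exact: sigma_algebra_measurable.
by move=> _ [[L _ ->]|->]; [exact: measurable_cylinder|exact: measurable0].
Qed.

Definition coord_map (pi : nat -> nat) (fl : nat -> bool) (x : coins) : coins :=
  fun k => x (pi k) (+) fl k.

Lemma coord_mapK pi pi' fl :
  cancel pi' pi -> cancel (coord_map pi fl) (coord_map pi' (fl \o pi')).
Proof.
move=> piK x; apply/funext => k.
by rewrite /coord_map /= piK -addbA addbb addbF.
Qed.

Lemma measurable_coord_map pi fl : measurable_fun setT (coord_map pi fl).
Proof.
apply: measurable_fun_coins => k b.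
have -> : coord_map pi fl @^-1` [set x | x k = b] = [set x : coins | x (pi k) = b (+) fl k].
  apply/seteqP; split => x; rewrite /coord_map /=.
    by move=> <-; rewrite -addbA addbb addbF.
  by move=> ->; rewrite -addbA addbb addbF.
exact: measurable_coin_coord.
Qed.

HB.instance Definition _ pi fl :=
  isMeasurableFun.Build _ _ _ _ (coord_map pi fl) (measurable_coord_map pi fl).

Lemma coord_map_cylinder pi fl L :
  coord_map pi fl @^-1` cylinder L = cylinder (map (fun p => (pi p.1, p.2 (+) fl p.1)) L).
Proof.
rewrite /cylinder /matches /coord_map; apply/seteqP; split => x /=; rewrite all_map;
  have E (p : nat * bool) : (x (pi p.1) (+) fl p.1 == p.2) = (x (pi p.1) == p.2 (+) fl p.1)
    by case: (x _); case: (fl _); case: p.2.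
  all: by rewrite (eq_all E).
Qed.

Lemma coord_map_preserving (R : realType) pi fl : injective pi ->
  forall A : set coins, measurable A -> coin R (coord_map pi fl @^-1` A) = coin R A.
Proof.
move=> pi_inj A mA.
have := @measure_unique _ R coins cylinder_system (fun _ => setT) measurable_coinsE
  cylinder_system_setI (fun _ => cylinder_system_setT).
move=> /(_ _ (distribution (coin R) (coord_map pi fl)) (coin R)); apply => //.
- by rewrite bigcup_const.
- move=> B [[L uL ->]|->]; last by rewrite !measure0.
  transitivity (coin R (coord_map pi fl @^-1` cylinder L)); first by [].
  rewrite coord_map_cylinder coin_cylinder ?size_map; first by symmetry; exact: coin_cylinder.
  have -> : [seq i.1 | i <- [seq (pi p.1, p.2 (+) fl p.1) | p <- L]] =
            map pi (map fst L) by rewrite -!map_comp.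
  by rewrite map_inj_uniq.
- move=> _; have h := probability_setT (distribution (coin R) (coord_map pi fl)).
  by rewrite [X in (X < _)%E]h ltry.
Qed.

Lemma invertible_mpt_coord_map (R : realType) pi pi' fl :
  cancel pi pi' -> cancel pi' pi ->
  invertible_mpt (coin R) (coord_map pi fl) (coord_map pi' (fl \o pi')).
Proof.
move=> piK pi'K; split; [exact: measurable_coord_map|exact: measurable_coord_map| | |].
- exact: coord_mapK.
- by move=> x; apply/funext => k; rewrite /coord_map /= piK -addbA addbb addbF.
- by move=> A mA; apply: coord_map_preserving => //; exact: can_inj piK.
Qed.

(** * Coordinates indexed by [int * 'I_4] *)

Definition nat_of_int (j : int) : nat :=
  match j with Posz n => n.*2 | Negz n => n.*2.+1 end.

Definition int_of_nat (n : nat) : int := if odd n then Negz n./2 else Posz n./2.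

Lemma nat_of_intK : cancel nat_of_int int_of_nat.
Proof.
case=> n; rewrite /int_of_nat /= odd_double /= ?doubleK //.
by congr Negz; exact: uphalf_double.
Qed.

Lemma int_of_natK : cancel int_of_nat nat_of_int.
Proof.
move=> n; rewrite /int_of_nat; have := odd_double_half n.
by case: (odd n) => /= e; rewrite -[RHS]e.
Qed.

(* [cell j r] is the coordinate of row [r < 4] at time [j]. *)
Definition cell (j : int) (r : nat) : nat := (4 * nat_of_int j + r)%N.
Definition cell_time (k : nat) : int := int_of_nat (k %/ 4).
Definition cell_row (k : nat) : nat := (k %% 4)%N.

Lemma cell_row_lt k : (cell_row k < 4)%N.
Proof. by rewrite /cell_row ltn_pmod. Qed.

Lemma cell_timeK j r : (r < 4)%N -> cell_time (cell j r) = j.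
Proof.
by move=> r4; rewrite /cell_time /cell mulnC divnMDl // divn_small // addn0 nat_of_intK.
Qed.

Lemma cell_rowK j r : (r < 4)%N -> cell_row (cell j r) = r.
Proof. by move=> r4; rewrite /cell_row /cell mulnC modnMDl modn_small. Qed.

Lemma cellK k : cell (cell_time k) (cell_row k) = k.
Proof. by rewrite /cell /cell_time /cell_row int_of_natK mulnC -divn_eq. Qed.

Lemma cell_inj j r j' r' : (r < 4)%N -> (r' < 4)%N ->
  cell j r = cell j' r' -> j = j' /\ r = r'.
Proof.
move=> r4 r'4 e; split; first by rewrite -(cell_timeK j r4) e cell_timeK.
by rewrite -(cell_rowK j r4) e cell_rowK.
Qed.

Definition shift_cell (z : int) (k : nat) : nat := cell (cell_time k + z) (cell_row k).

Lemma shift_cellD z z' k : shift_cell z (shift_cell z' k) = shift_cell (z' + z) k.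
Proof.
by rewrite /shift_cell cell_timeK ?cell_row_lt // cell_rowK ?cell_row_lt // addrA.
Qed.

Lemma shift_cell0 k : shift_cell 0 k = k.
Proof. by rewrite /shift_cell addr0 cellK. Qed.

Lemma shift_cellK z : cancel (shift_cell z) (shift_cell (- z)).
Proof. by move=> k; rewrite shift_cellD subrr shift_cell0. Qed.

Lemma shift_cellNK z : cancel (shift_cell (- z)) (shift_cell z).
Proof. by move=> k; rewrite shift_cellD addNr shift_cell0. Qed.

Definition shift : coins -> coins := coord_map (shift_cell 1) (fun _ => false).
Definition shift_inv : coins -> coins := coord_map (shift_cell (-1)) (fun _ => false).

Lemma iterz_shift (z : int) (x : coins) :
  iterz shift shift_inv z x = fun k => x (shift_cell z k).
Proof.
apply/funext => k; case: z => n /=; elim: n k => [|n IHn] k /=.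
- by rewrite shift_cell0.
- by rewrite /shift /coord_map addbF IHn shift_cellD.
- by rewrite /shift_inv /coord_map addbF.
- by rewrite {1}/shift_inv /coord_map addbF IHn shift_cellD.
Qed.

Lemma iterz_shift_cell z r x : (r < 4)%N ->
  iterz shift shift_inv z x (cell 0 r) = x (cell z r).
Proof. by move=> r4; rewrite iterz_shift /shift_cell cell_timeK // cell_rowK // add0r. Qed.

Lemma invertible_mpt_shift (R : realType) : invertible_mpt (coin R) shift shift_inv.
Proof. exact/invertible_mpt_coord_map/shift_cellK/shift_cellNK. Qed.

Section SeqInv.
Variable f : nat -> int.

Definition seq_inv (j : int) : option nat :=
  if pselect (exists n, (0 < n)%N && (f n == j)) is left h then Some (ex_minn h)
  else None.

Lemma seq_invP j n : seq_inv j = Some n -> (0 < n)%N /\ f n = j.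
Proof.
rewrite /seq_inv; case: pselect => // h [<-].
by case: ex_minnP => m /andP[m0 /eqP fm] _.
Qed.

Lemma seq_inv_f n : {in [pred n : nat | (0 < n)%N] &, injective f} ->
  (0 < n)%N -> seq_inv (f n) = Some n.
Proof.
move=> f_inj n0; case E: (seq_inv (f n)) => [m|].
  by have [m0 fm] := seq_invP E; rewrite (f_inj _ _ m0 n0 fm).
by move: E; rewrite /seq_inv; case: pselect => // -[]; exists n; rewrite n0 eqxx.
Qed.

End SeqInv.

(* Moves the even-row cells at time [q n] to time [p n]; the odd rows absorb the
   mismatch between the ranges of [q] and [p], which makes this a bijection. *)
Definition relabel (p q : nat -> int) (k : nat) : nat :=
  let j := cell_time k in let r := cell_row k in
  if ~~ odd r then
    if seq_inv q j is Some n then cell (p n) r else cell j r.+1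
  else
    if seq_inv p j is Some n then cell (q n) r else cell j r.-1.

Lemma relabelK (p q : nat -> int) :
  {in [pred n : nat | (0 < n)%N] &, injective p} ->
  {in [pred n : nat | (0 < n)%N] &, injective q} ->
  cancel (relabel p q) (relabel q p).
Proof.
move=> p_inj q_inj k; have r4 := cell_row_lt k.
rewrite {2}/relabel; case: ifPn => [ev|/negbNE od].
  have r3 : (cell_row k < 3)%N by move: r4 ev; case: (cell_row k) => [|[|[|[|]]]].
  case E: (seq_inv q (cell_time k)) => [n|].
    have [n0 qn] := seq_invP E.
    by rewrite /relabel cell_timeK // cell_rowK // ev seq_inv_f // qn cellK.
  by rewrite /relabel cell_timeK // cell_rowK //= ev /= E cellK.
have r0 : (0 < cell_row k)%N by move: od; case: (cell_row k).
case E: (seq_inv p (cell_time k)) => [n|].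
  have [n0 pn] := seq_invP E.
  by rewrite /relabel cell_timeK // cell_rowK // od seq_inv_f // pn cellK.
have r1 : ((cell_row k).-1 < 4)%N by rewrite (leq_ltn_trans (leq_pred _)).
rewrite /relabel cell_timeK // cell_rowK //.
have -> : ~~ odd (cell_row k).-1 by move: od r0; case: (cell_row k).
by rewrite E prednK // cellK.
Qed.

Definition block_parity (n : nat) : bool := odd (trunc_log 2 n.-1).

Section ConjugatedShift.
Variables a b : nat -> int.
Hypothesis a_inj : {in [pred n : nat | (0 < n)%N] &, injective a}.
Hypothesis b_inj : {in [pred n : nat | (0 < n)%N] &, injective b}.
Hypothesis b_neq0 : forall n : nat, (0 < n)%N -> b n != 0.

Definition flips (k : nat) : bool :=
  if seq_inv b (cell_time k) is Some n then
    if cell_row k == 0%N then block_parity n else cell_row k == 2%N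
  else false.

Definition conj_map : coins -> coins := coord_map (relabel a b) flips.
Definition conj_map_inv : coins -> coins := coord_map (relabel b a) (flips \o relabel b a).

Lemma conj_mapK : cancel conj_map conj_map_inv.
Proof. exact/coord_mapK/relabelK. Qed.

Lemma conj_map_invK : cancel conj_map_inv conj_map.
Proof.
move=> x; apply/funext => k.
by rewrite /conj_map /conj_map_inv /coord_map /= relabelK // -addbA addbb addbF.
Qed.

Definition conj_shift (x : coins) : coins := conj_map_inv (shift (conj_map x)).
Definition conj_shift_inv (x : coins) : coins := conj_map_inv (shift_inv (conj_map x)).

Lemma iterz_conj_shift z x :
  iterz conj_shift conj_shift_inv z x = conj_map_inv (iterz shift shift_inv z (conj_map x)).
Proof.
case: z => n /=; elim: n => [|n IHn] /=; rewrite ?conj_mapK //.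
- by rewrite IHn /conj_shift conj_map_invK.
- by rewrite IHn /conj_shift_inv conj_map_invK.
Qed.

Lemma seq_inv_b0 : seq_inv b 0 = None.
Proof.
case E: (seq_inv b 0) => [n|] //.
by have [n0 bn] := seq_invP E; have := b_neq0 n0; rewrite bn eqxx.
Qed.

Lemma conj_map_inv_cell0 x r : (r < 3)%N -> ~~ odd r ->
  conj_map_inv x (cell 0 r.+1) = x (cell 0 r).
Proof.
move=> r3 ev; have r4 : (r < 4)%N by rewrite ltnW.
rewrite /conj_map_inv /coord_map /= /relabel cell_timeK // cell_rowK //= ev /=.
by rewrite seq_inv_b0 /flips cell_timeK // seq_inv_b0 addbF.
Qed.

Lemma conj_map_cell n r x : (0 < n)%N -> (r < 4)%N -> ~~ odd r ->
  conj_map x (cell (b n) r) = x (cell (a n) r) (+) flips (cell (b n) r).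
Proof.
move=> n0 r4 ev; rewrite /conj_map /coord_map /relabel.
by rewrite cell_timeK // cell_rowK // ev seq_inv_f.
Qed.

Lemma iterz_conj_shift_cell1 n x : (0 < n)%N ->
  iterz conj_shift conj_shift_inv (b n) x (cell 0 1) = x (cell (a n) 0) (+) block_parity n.
Proof.
move=> n0; rewrite iterz_conj_shift conj_map_inv_cell0 // iterz_shift_cell //.
by rewrite conj_map_cell // /flips cell_timeK // cell_rowK // seq_inv_f.
Qed.

Lemma iterz_conj_shift_cell3 n x : (0 < n)%N ->
  iterz conj_shift conj_shift_inv (b n) x (cell 0 3) = ~~ x (cell (a n) 2).
Proof.
move=> n0; rewrite iterz_conj_shift conj_map_inv_cell0 // iterz_shift_cell //.
by rewrite conj_map_cell // /flips cell_timeK // cell_rowK // seq_inv_f // addbT.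
Qed.

End ConjugatedShift.

(** * Conjugation by an invertible measure-preserving map *)

Lemma measurable_preimage d d' (X : measurableType d) (Y : measurableType d')
  (f : X -> Y) (B : set Y) : measurable_fun setT f -> measurable B -> measurable (f @^-1` B).
Proof. by move=> mf mB; rewrite -[X in measurable X]setTI; exact: mf. Qed.

Section Conjugate.
Context d (X : measurableType d) (R : realType) (mu : {measure set X -> \bar R}).

Lemma ae_preimage d' (Y : measurableType d') (nu : {measure set Y -> \bar R})
    (P : X -> Y) (Q : Y -> Prop) :
  measurable_fun setT P -> (forall B, measurable B -> mu (P @^-1` B) = nu B) ->
  {ae nu, forall y, Q y} -> {ae mu, forall x, Q (P x)}.
Proof.
move=> mP Pnu [N [mN N0 QN]]; exists (P @^-1` N); split => //.
- exact: measurable_preimage.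
- by rewrite Pnu.
- by move=> x nQ; apply: QN.
Qed.

Variables P Pinv : X -> X.
Hypothesis P_mpt : invertible_mpt mu P Pinv.

Lemma invertible_mpt_inv : invertible_mpt mu Pinv P.
Proof.
case: P_mpt => mP mPinv PK PinvK Pmu; split => // A mA.
rewrite -(Pmu _ (measurable_preimage mPinv mA)).
by congr (mu _); apply/seteqP; split => x /=; rewrite PK.
Qed.

Lemma invertible_mpt_conj (T Tinv : X -> X) : invertible_mpt mu T Tinv ->
  invertible_mpt mu (Pinv \o T \o P) (Pinv \o Tinv \o P).
Proof.
case: P_mpt => mP mPinv PK PinvK Pmu [mT mTinv TK TinvK Tmu].
have [_ _ _ _ Pinv_mu] := invertible_mpt_inv.
split.
- by apply: measurableT_comp => //; exact: measurableT_comp.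
- by apply: measurableT_comp => //; exact: measurableT_comp.
- by move=> x /=; rewrite PinvK TK PK.
- by move=> x /=; rewrite PinvK TinvK PK.
- move=> A mA; have mPinvA := measurable_preimage mPinv mA.
  have -> : (Pinv \o T \o P) @^-1` A = P @^-1` (T @^-1` (Pinv @^-1` A)) by [].
  by rewrite Pmu ?Tmu ?Pinv_mu //; exact: measurable_preimage.
Qed.

Lemma is_bernoulli_conj (T : X -> X) :
  is_bernoulli mu T -> is_bernoulli mu (Pinv \o T \o P).
Proof.
case: P_mpt => mP mPinv PK PinvK Pmu.
move=> [k [p [nu [phi [psi [p_ok nu_cyl [mphi mpsi] phi_nu [psiK phiK phiT]]]]]]].
exists k, p, nu, (phi \o P), (Pinv \o psi); split => //.
- by split; apply: measurableT_comp.
- by move=> B mB; rewrite comp_preimage Pmu ?phi_nu //; exact: measurable_preimage mphi mB.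
- split.
  + by apply: filterS (ae_preimage mP Pmu psiK) => x /= ->.
  + by apply: filterS phiK => z; rewrite /= PinvK.
  + by apply: filterS (ae_preimage mP Pmu phiT) => x /= <-; rewrite PinvK.
Qed.

End Conjugate.

(** * The shift on [coins] is a Bernoulli shift on 16 symbols *)

Definition pack4 (b0 b1 b2 b3 : bool) : 'I_16 := inord (b0 + 2 * b1 + 4 * b2 + 8 * b3)%N.
Definition bit_of (i : 'I_16) (r : nat) : bool := odd (i %/ 2 ^ r)%N.

Lemma bit_of_pack4 b0 b1 b2 b3 :
  [/\ bit_of (pack4 b0 b1 b2 b3) 0 = b0, bit_of (pack4 b0 b1 b2 b3) 1 = b1,
      bit_of (pack4 b0 b1 b2 b3) 2 = b2 & bit_of (pack4 b0 b1 b2 b3) 3 = b3].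
Proof. by rewrite /bit_of /pack4 inordK; case: b0; case: b1; case: b2; case: b3. Qed.

Lemma pack4_bits (i : 'I_16) : pack4 (bit_of i 0) (bit_of i 1) (bit_of i 2) (bit_of i 3) = i.
Proof.
apply: val_inj; case: i => m /= m16.
suff E : (odd m + 2 * odd (m %/ 2) + 4 * odd (m %/ 4) + 8 * odd (m %/ 8) = m)%N.
  by rewrite /pack4 /bit_of /= divn1 E inordK.
by do 16 (case: m m16 => [//|m] m16).
Qed.

Lemma pack4_eq b0 b1 b2 b3 s : pack4 b0 b1 b2 b3 = s <->
  [/\ b0 = bit_of s 0, b1 = bit_of s 1, b2 = bit_of s 2 & b3 = bit_of s 3].
Proof.
split => [<-|[-> -> -> ->]]; last exact: pack4_bits.
by have [-> -> -> ->] := bit_of_pack4 b0 b1 b2 b3.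
Qed.

Lemma measurable_shift_coord k j (s : 'I_k.+1) :
  measurable [set z : shift_space k | z j = s].
Proof. by apply: sub_sigma_algebra; exists j, s. Qed.

Lemma measurable_fun_shift_space k d (T : measurableType d) (f : T -> shift_space k) :
  (forall j s, measurable (f @^-1` [set z | z j = s])) -> measurable_fun setT f.
Proof.
move=> mf; apply: (@measurability _ _ _ _ setT f (shift_coords k)) => //.
by move=> _ [_ [j [s ->]] <-]; rewrite setTI; exact: mf.
Qed.

Definition to_shift (x : coins) : shift_space 15 :=
  fun j => pack4 (x (cell j 0)) (x (cell j 1)) (x (cell j 2)) (x (cell j 3)).

Definition of_shift (z : shift_space 15) : coins :=
  fun k => bit_of (z (cell_time k)) (cell_row k).

Lemma to_shiftK : cancel to_shift of_shift.
Proof.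
move=> x; apply/funext => k; rewrite /of_shift /to_shift -[in RHS](cellK k).
have [? ? ? ?] := bit_of_pack4 (x (cell (cell_time k) 0)) (x (cell (cell_time k) 1))
  (x (cell (cell_time k) 2)) (x (cell (cell_time k) 3)).
by have := cell_row_lt k; case: (cell_row k) => [|[|[|[|]]]].
Qed.

Lemma of_shiftK : cancel of_shift to_shift.
Proof.
move=> z; apply/funext => j.
by rewrite /to_shift /of_shift !cell_timeK // !cell_rowK // pack4_bits.
Qed.

Lemma to_shift_shift x : to_shift (shift x) = shift_map 15 (to_shift x).
Proof.
apply/funext => j; rewrite /to_shift /shift_map /shift /coord_map /shift_cell.
by rewrite !addbF !cell_timeK // !cell_rowK.
Qed.

Definition word_cells m (n0 : int) (w : 'I_m -> 'I_16) : seq (nat * bool) :=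
  [seq (cell (n0 + (nat_of_ord i)%:Z) r, bit_of (w i) r) | i <- enum 'I_m, r <- iota 0 4].

Lemma to_shift_cylinder m (n0 : int) (w : 'I_m -> 'I_16) :
  to_shift @^-1` [set z | forall i : 'I_m, z (n0 + (i : nat)%:Z) = w i] =
  cylinder (word_cells n0 w).
Proof.
apply/seteqP; split => x /=.
  move=> xw; apply/allP => p /allpairsP [[i r] [/= _ rin ->]] /=.
  have /pack4_eq [e0 e1 e2 e3] := xw i.
  by move: rin; rewrite !inE => /or4P [] /eqP ->; apply/eqP.
move=> /allP xw i; apply/pack4_eq.
have xwr r : (r < 4)%N -> x (cell (n0 + (i : nat)%:Z) r) = bit_of (w i) r.
  move=> r4; apply/eqP/(xw (cell (n0 + (i : nat)%:Z) r, bit_of (w i) r)).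
  apply: (allpairs_f (fun (i : 'I_m) r => (cell (n0 + (nat_of_ord i)%:Z) r, bit_of (w i) r))).
    by rewrite mem_enum.
  by rewrite mem_iota.
by split; apply: xwr.
Qed.

Lemma uniq_word_cells m (n0 : int) (w : 'I_m -> 'I_16) : uniq (map fst (word_cells n0 w)).
Proof.
rewrite /word_cells map_allpairs.
apply: (@allpairs_uniq _ _ _ (fun (i : 'I_m) r => cell (n0 + (nat_of_ord i)%:Z) r));
  [exact: enum_uniq|exact: iota_uniq|].
move=> [i r] [i' r'] /allpairsP[[? ?] [_ + [_ ->]]] /allpairsP[[? ?] [_ + [_ ->]]] /=.
rewrite !mem_iota /= => r4 r'4 /(cell_inj r4 r'4) [/addrI/eqP + ->].
by rewrite eqz_nat => /eqP/val_inj ->.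
Qed.

Lemma measurable_to_shift : measurable_fun setT to_shift.
Proof.
apply: measurable_fun_shift_space => j s.
have -> : [set z : shift_space 15 | z j = s] =
    [set z | forall i : 'I_1, z (j + (nat_of_ord i)%:Z) = (fun=> s) i].
  apply/seteqP; split => z /=; last by move/(_ ord0); rewrite addr0.
  by move=> zj i; rewrite (ord1 i) addr0.
by rewrite to_shift_cylinder; exact: measurable_cylinder.
Qed.

Lemma measurable_of_shift : measurable_fun setT of_shift.
Proof.
apply: measurable_fun_coins => k b.
have -> : of_shift @^-1` [set x | x k = b] =
    \bigcup_(s in [set s : 'I_16 | bit_of s (cell_row k) = b]) [set z | z (cell_time k) = s].
  apply/seteqP; split => z /=; first by move=> zk; exists (z (cell_time k)).
  by move=> [s /= sb zs]; rewrite /of_shift zs.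
apply: fin_bigcup_measurable => [|s _]; first exact: finite_finset.
exact: measurable_shift_coord.
Qed.

HB.instance Definition _ := isMeasurableFun.Build _ _ _ _ to_shift measurable_to_shift.

Lemma is_bernoulli_shift (R : realType) : is_bernoulli (coin R) shift.
Proof.
exists 15%N, (fun _ => 16%:R^-1), (distribution (coin R) to_shift), to_shift, of_shift.
split.
- split => [i|]; first by rewrite invr_gt0 ltr0n.
  by rewrite sumr_const card_ord -[_ *+ 16]mulr_natr mulVf // pnatr_eq0.
- move=> m n0 w.
  transitivity (coin R (to_shift @^-1` [set z | forall i : 'I_m, z (n0 + i%:Z) = w i])).
    by [].
  rewrite to_shift_cylinder coin_cylinder ?uniq_word_cells //; congr EFin.
  rewrite size_allpairs size_enum_ord size_iota prodr_const card_ord.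
  by rewrite exprVn mulnC exprM -natrX.
- by split; [exact: measurable_to_shift|exact: measurable_of_shift].
- by [].
- by split; apply: aeW => x; [exact: to_shiftK|exact: of_shiftK|exact: to_shift_shift].
Qed.

(** * Divergence of the averages *)

Section Averages.
Variable R : realType.

Definition parity_sign (n : nat) : R := if block_parity n then -1 else 1.

Definition sign_sum (N : nat) : R := \sum_(1 <= n < N.+1) parity_sign n.

Lemma block_parityE m n : (2 ^ m < n <= 2 ^ m.+1)%N -> block_parity n = odd m.
Proof. by move=> /andP[n_gt n_le]; rewrite /block_parity (@trunc_log_eq 2 m) //; lia. Qed.

Lemma sign_sum_block m :
  sign_sum (2 ^ m.+1) - sign_sum (2 ^ m) = (2 ^ m)%:R * (if odd m then -1 else 1).
Proof.
rewrite /sign_sum (big_cat_nat _ (n := (2 ^ m).+1)) //=; last by rewrite ltnS leq_pexp2l.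
rewrite addrC addrK (eq_big_nat _ _ (F2 := fun=> if odd m then -1 else 1)).
  by rewrite sumr_const_nat mulr_natl expnS; congr (_ *+ _); lia.
by move=> n /andP[n_gt n_le]; rewrite /parity_sign (@block_parityE m) //; lia.
Qed.

Definition sign_avg (N : nat) : R := N%:R^-1 * sign_sum N.

Lemma sign_avg_block m :
  2 * sign_avg (2 ^ m.+1) - sign_avg (2 ^ m) = if odd m then -1 else 1.
Proof.
have p : (2 ^ m)%:R != 0 :> R by rewrite pnatr_eq0 expn_eq0.
rewrite /sign_avg expnS natrM invfM !mulrA mulfV ?mul1r //.
apply: (mulfI p); rewrite mulrBr !mulrA mulfV ?mul1r //.
by rewrite -expnS sign_sum_block.
Qed.

(* By [sign_avg_block], a limit [l] would satisfy both [2 l - l = 1] and [2 l - l = -1]. *)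
Lemma sign_avg_not_cvg : ~ cvgn sign_avg.
Proof.
move=> /cvg_ex [l /cvgrPdist_lt /(_ 4^-1) []]; first by rewrite invr_gt0.
move=> N0 _ near_l.
have N0_le k : (N0 <= 2 ^ (N0 + k))%N.
  by rewrite (leq_trans (ltnW (ltn_expl _ (isT : (1 < 2)%N)))) // leq_pexp2l // leq_addr.
have := near_l _ (N0_le 0%N); have := near_l _ (N0_le 1%N); have := near_l _ (N0_le 2%N).
have := sign_avg_block (N0 + 0); have := sign_avg_block (N0 + 1).
rewrite /= !ltr_distl !addnS !addn0 oddS /sign_avg.
by case: (odd N0) => /= ? ? /andP[? ?] /andP[? ?] /andP[? ?]; lra.
Qed.

End Averages.

Definition coord_sign (R : realType) (k : nat) (x : coins) : R := if x k then 1 else -1.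

Lemma Linfty_coord_sign (R : realType) k : Linfty_fun (coord_sign R k).
Proof.
split; last by exists 1 => x; rewrite /coord_sign; case: (x k); rewrite ?normrN normr1.
apply: measurable_fun_ifT => //; apply: (measurable_fun_bool true).
by rewrite setTI; exact: measurable_coin_coord.
Qed.

Section Counterexample.
Variable R : realType.
Variables a b : nat -> int.
Hypothesis a_inj : {in [pred n : nat | (0 < n)%N] &, injective a}.
Hypothesis b_inj : {in [pred n : nat | (0 < n)%N] &, injective b}.
Hypothesis b_neq0 : forall n : nat, (0 < n)%N -> b n != 0.

Local Notation T := shift.
Local Notation Tinv := shift_inv.
Local Notation S := (conj_shift a b).
Local Notation Sinv := (conj_shift_inv a b).

Lemma invertible_mpt_conj_shift : invertible_mpt (coin R) S Sinv.
Proof.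
apply: invertible_mpt_conj (invertible_mpt_shift R).
by apply: invertible_mpt_coord_map; exact: relabelK.
Qed.

Lemma is_bernoulli_conj_shift : is_bernoulli (coin R) S.
Proof.
apply: is_bernoulli_conj (is_bernoulli_shift R).
by apply: invertible_mpt_coord_map; exact: relabelK.
Qed.

Lemma integral_coord_signs n : (0 < n)%N ->
  (\int[coin R]_x (coord_sign R (cell 0 0) (iterz T Tinv (a n) x)
                   * coord_sign R (cell 0 1) (iterz S Sinv (b n) x))%:E
   = (parity_sign R n)%:E)%E.
Proof.
move=> n0; rewrite (eq_integral (cst (parity_sign R n)%:E)); last first.
  move=> x _; rewrite /coord_sign iterz_shift_cell // iterz_conj_shift_cell1 //.
  rewrite /parity_sign.
  by case: (x _); case: (block_parity n); rewrite /= ?mul1r ?mulN1r ?opprK.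
rewrite integral_cst // (_ : _ [set: _] = 1%E) ?mule1 //.
exact: (probability_setT (coin R)).
Qed.

Definition zero_rows23 : set coins := cylinder [:: (cell 0 2, false); (cell 0 3, false)].

Lemma zero_rows23_disjoint n : (0 < n)%N ->
  iterz T Tinv (a n) @^-1` zero_rows23 `&` iterz S Sinv (b n) @^-1` zero_rows23 = set0.
Proof.
move=> n0; apply/seteqP; split => // x [] /=; rewrite /zero_rows23 /cylinder /matches /=.
rewrite iterz_shift_cell // iterz_conj_shift_cell3 //.
by move=> /andP[/eqP -> _] /andP[_ /andP[]].
Qed.

Lemma zero_rows23_gt0 : (0 < coin R zero_rows23)%E.
Proof. by rewrite coin_cylinder // lte_fin invr_gt0 exprn_gt0. Qed.

End Counterexample.

Unset Implicit Arguments.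

Theorem theorem1p7 (R : realType) (a b : nat -> int)
  (ha_inj : {in [pred n : nat | (0 < n)%N] &, injective a})
  (hb_inj : {in [pred n : nat | (0 < n)%N] &, injective b})
  (ha0 : forall n : nat, (0 < n)%N -> a n != 0)
  (hb0 : forall n : nat, (0 < n)%N -> b n != 0) :
  exists (d : measure_display) (X : measurableType d)
         (mu : probability X R) (T Tinv S Sinv : X -> X),
    [/\ invertible_mpt mu T Tinv, invertible_mpt mu S Sinv,
        is_bernoulli mu T /\ is_bernoulli mu S,
        (exists f g : X -> R, Linfty_fun f /\ Linfty_fun g /\
           ~ cvgn (fun N : nat =>
               N%:R^-1 * \sum_(1 <= n < N.+1)
                 fine (\int[mu]_x (f (iterz T Tinv (a n) x)
                                   * g (iterz S Sinv (b n) x))%:E)))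
      & exists A : set X, measurable A /\ (0 < mu A)%E /\
          forall n : nat, (0 < n)%N ->
            mu (iterz T Tinv (a n) @^-1` A `&` iterz S Sinv (b n) @^-1` A) = 0%E].
Proof.
exists _, coins, (coin R), shift, shift_inv, (conj_shift a b), (conj_shift_inv a b).
split.
- exact: invertible_mpt_shift.
- exact: invertible_mpt_conj_shift.
- by split; [exact: is_bernoulli_shift|exact: is_bernoulli_conj_shift].
- exists (coord_sign R (cell 0 0)), (coord_sign R (cell 0 1)).
  do 2 (split; first exact: Linfty_coord_sign).
  rewrite (_ : (fun N : nat => _) = sign_avg R).
    exact: sign_avg_not_cvg.
  apply/funext => N; rewrite /sign_avg /sign_sum; congr (_ * _).
  by apply: eq_big_nat => n /andP[n_gt0 _]; rewrite integral_coord_signs.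
- exists zero_rows23; split; first exact: measurable_cylinder.
  split; first exact: zero_rows23_gt0.
  by move=> n n_gt0; rewrite zero_rows23_disjoint // measure0.
Qed.
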